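(* Let $\mathcal C$ be an epireflective subcategory of $\mathbf{Top}$ such that the reflection arrow $\mathrm{r}_{(X,\mathcal C)}$ is an open map for every topological space $X$, and let $\{X_i:i\in I\}$ be a set of topological spaces. Then $\mathcal C$ preserves the product $\prod_{i\in I}X_i$, i.e., the canonical map $\mu_{\mathcal C}\colon\mathrm{r}_{\mathcal C}\prod_{i\in I}X_i\to\prod_{i\in I}\mathrm{r}_{\mathcal C}X_i$ is a homeomorphism.
   Context: An epireflective subcategory $\mathcal C$ of $\mathbf{Top}$ is a full, isomorphism-closed subcategory closed under products and subspaces; each space $X$ has a reflection $\mathrm{r}_{\mathcal C}X\in\mathcal C$ with a continuous surjection $\mathrm{r}_{(X,\mathcal C)}\colon X\to\mathrm{r}_{\mathcal C}X$ through which every continuous map from $X$ into a space of $\mathcal C$ factors uniquely; $\mathrm{r}_{\mathcal C}(f)$ denotes the induced map. $\mu_{\mathcal C}$ is the unique continuous map with $\pi_j\circ\mu_{\mathcal C}=\mathrm{r}_{\mathcal C}(\pi_{X_j})$ for all $j$, where $\pi$ denote canonical projections. *)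

From HB Require Import structures.
From mathcomp Require Import all_boot all_algebra.
From mathcomp Require Import all_classical.
From mathcomp Require Import topology_structure function_spaces subtype_topology.
Set Implicit Arguments. Unset Strict Implicit. Unset Printing Implicit Defensive.
Local Open Scope classical_set_scope.

Definition homeomorphism {X Y : topologicalType} (f : X -> Y) : Prop :=
  continuous f /\
  exists g : Y -> X, [/\ continuous g, cancel f g & cancel g f].

(* A (full) subcategory of Top is given by its class of objects. *)
Definition iso_closed (C : topologicalType -> Prop) : Prop :=
  forall (X Y : topologicalType) (f : X -> Y), homeomorphism f -> C X -> C Y.

Definition product_closed (C : topologicalType -> Prop) : Prop :=
  forall (I : Type) (T : I -> topologicalType),
    (forall i, C (T i)) -> C (prod_topology T : topologicalType).

Definition subspace_closed (C : topologicalType -> Prop) : Prop :=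
  forall (X : topologicalType) (A : set X), C X -> C (set_type A : topologicalType).

Definition is_reflection (C : topologicalType -> Prop) (X R : topologicalType)
    (r : X -> R) : Prop :=
  [/\ C R, continuous r, (forall y : R, exists x : X, r x = y) &
      forall (Y : topologicalType), C Y -> forall f : X -> Y, continuous f ->
        exists! g : R -> Y, continuous g /\ g \o r = f].

Definition epireflective (C : topologicalType -> Prop)
    (refl : topologicalType -> topologicalType)
    (rX : forall X : topologicalType, X -> refl X) : Prop :=
  [/\ iso_closed C, product_closed C, subspace_closed C &
      forall X : topologicalType, is_reflection C (rX X)].

(* [g] is the induced map r_C(f) : refl X -> refl Y of a continuous f : X -> Y,
   i.e. the (unique) continuous g with g o r_X = r_Y o f *)
Definition is_refl_map (refl : topologicalType -> topologicalType)
    (rX : forall X : topologicalType, X -> refl X)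
    (X Y : topologicalType) (f : X -> Y) (g : refl X -> refl Y) : Prop :=
  continuous g /\ g \o rX X = rX Y \o f.

Definition open_map {X Y : topologicalType} (f : X -> Y) : Prop :=
  forall A : set X, open A -> open (f @` A).

Definition is_mu (refl : topologicalType -> topologicalType)
    (rX : forall X : topologicalType, X -> refl X)
    (I : Type) (X : I -> topologicalType)
    (mu : refl (prod_topology X : topologicalType) ->
          prod_topology (fun i => refl (X i))) : Prop :=
  continuous (mu : _ -> (prod_topology (fun i => refl (X i)) : topologicalType)) /\
  forall j : I,
    is_refl_map rX (fun x : (prod_topology X : topologicalType) => x j)
                   (fun z => mu z j).

From HB Require Import structures.
From mathcomp Require Import all_boot all_algebra.
From mathcomp Require Import all_classical.
From mathcomp Require Import topology_structure function_spaces subtype_topology.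
From mathcomp Require Import supremum_topology initial_topology.
Local Open Scope classical_set_scope.

(* Proof: the product p of the reflection arrows r_i is a continuous open
   surjection onto a space of C, so p = mu o r for the reflection r of the
   product, and mu is a homeomorphism once it is injective. Changing one
   coordinate of x inside a fibre of r_k does not change r x, since
   r o (insert at k) factors through r_k; as basic open sets constrain finitely
   many coordinates, p x = p y makes r x and r y topologically
   indistinguishable. If they were distinct, the map sending one point u of X_i
   to r x and all other points to r y would be continuous, and factoring it
   through r_i would show r_i injective; then x = y after all. *)

Section product_boxes.
Context {I : eqType} {T : I -> topologicalType}.

Definition box (K : seq I) (V : forall i, set (T i)) : set (prod_topology T) :=
  [set z | forall i, i \in K -> V i (z i)].

Definition coord_open_nbhs (x : prod_topology T) (V : forall i, set (T i)) :=
  forall i, open (V i) /\ V i (x i).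

Lemma box_nbhs {x} K {V} : coord_open_nbhs x V -> nbhs x (box K V).
Proof.
move=> xV; elim: K => [|k K IH]; first by apply: filterE => z i; rewrite in_nil.
have Vk : nbhs x (proj k @^-1` V k).
  by apply: proj_continuous; apply: open_nbhs_nbhs; split; case: (xV k).
apply: filterS (filterI Vk IH) => z [Vkz VKz] i.
by rewrite in_cons => /orP [/eqP -> //|]; exact: VKz.
Qed.

Lemma nbhs_box {x S} :
  nbhs x S -> exists K V, coord_open_nbhs x V /\ box K V `<=` S.
Proof.
pose F : set_system (prod_topology T) :=
  fun A => exists K V, coord_open_nbhs x V /\ box K V `<=` A.
have F_filter : Filter F.
  constructor.
  - by exists [::], (fun _ => setT); split => // i; split => //; exact: openT.
  - move=> A B [K1 [V1 [xV1 A1]]] [K2 [V2 [xV2 B2]]].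
    exists (K1 ++ K2), (fun i => V1 i `&` V2 i); split.
      move=> i; have [oV1 V1x] := xV1 i; have [oV2 V2x] := xV2 i.
      by split; [exact: openI|].
    move=> z Vz; split.
      by apply: A1 => i iK; case: (Vz i) => //; rewrite mem_cat iK.
    by apply: B2 => i iK; case: (Vz i) => //; rewrite mem_cat iK orbT.
  - by move=> A B AB [K [V [xV AV]]]; exists K, V; split => // z /AV /AB.
(* F is finer than every initial topology of a projection, hence than their
   supremum, the product topology. *)
suff : F --> (x : prod_topology T) by apply.
apply/cvg_sup => i A.
have /= -> := @nbhsE (initial_topology (fun f : prod_topology T => f i)) x.
case=> B [[U oU <-] Ux] BA.
exists [:: i], (dfwith (fun j => setT) i U); split.
  move=> j; case: dfwithP => [|k _]; first by split.
  by split => //; exact: openT.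
by move=> z /(_ i); rewrite mem_seq1 eqxx dfwithin => /(_ isT) /BA.
Qed.

End product_boxes.

Section product_maps.
Context {I : eqType} {S T : I -> topologicalType} (f : forall i, S i -> T i).

Definition prod_map (x : prod_topology S) : prod_topology T := fun i => f i (x i).

Lemma prod_map_continuous : (forall i, continuous (f i)) -> continuous prod_map.
Proof.
move=> cf x A /nbhs_box [K [V [xV VA]]].
apply: filterS (box_nbhs K (V := fun i => f i @^-1` V i) _) => [z Vz|i].
  exact/VA.
have [oV Vx] := xV i; split => //.
exact: (continuousP _).1 (cf i) _ oV.
Qed.

Hypothesis f_surj : forall i y, exists x, f i x = y.

Lemma prod_map_surj y : exists x, prod_map x = y.
Proof.
exists (fun i => projT1 (cid (f_surj i (y i)))).
by apply: functional_extensionality_dep => i; rewrite /prod_map; case: cid.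
Qed.

Lemma prod_map_open : (forall i, open_map (f i)) -> open_map prod_map.
Proof.
move=> fopen W oW; rewrite openE => _ [w Ww <-].
have [K [V [wV VW]]] := nbhs_box (open_nbhs_nbhs (conj oW Ww)).
apply: filterS (box_nbhs K (V := fun i => f i @` V i) _) => [y fVy|i]; last first.
  by have [oV Vw] := wV i; split; [exact: fopen|exists (w i)].
have lift i : exists t, f i t = y i /\ (i \in K -> V i t).
  have [iK|iK] := boolP (i \in K); first by have [t Vt ft] := fVy i iK; exists t.
  by have [t ft] := f_surj i (y i); exists t.
exists (fun i => projT1 (cid (lift i))).
  by apply: VW => i iK; case: (cid (lift i)) => t /= [_ /(_ iK)].
apply: functional_extensionality_dep => i.
by rewrite /prod_map; case: (cid (lift i)) => t /= [].
Qed.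

End product_maps.

Lemma homeomorphism_of_open_factor {P A B : topologicalType}
    {r : P -> A} {p : P -> B} {mu : A -> B} :
  continuous r -> open_map p -> (forall b, exists x, p x = b) ->
  continuous mu -> injective mu -> mu \o r = p -> homeomorphism mu.
Proof.
move=> r_cont p_open p_surj mu_cont mu_inj mur.
pose s b := projT1 (cid (p_surj b)).
have ps b : p (s b) = b by rewrite /s; case: cid.
pose g b := r (s b).
have mu_g b : mu (g b) = b by rewrite /g -[mu _]/((mu \o r) _) mur ps.
have g_mu a : g (mu a) = a by apply: mu_inj; rewrite mu_g.
split=> //; exists g; split=> //.
apply/continuousP => U oU.
have -> : g @^-1` U = p @` (r @^-1` U).
  apply/seteqP; split=> [b gbU|_ [x rxU <-]]; first by exists (s b).
  by rewrite /preimage /= -mur g_mu.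
by apply: p_open; exact: (continuousP _).1 r_cont U oU.
Qed.

Section epireflection.
Variables (C : topologicalType -> Prop) (refl : topologicalType -> topologicalType)
  (rX : forall X : topologicalType, X -> refl X).
Hypothesis hC : @epireflective C refl rX.

Lemma refl_in X : C (refl X).
Proof. by case: hC => _ _ _ /(_ X) []. Qed.

Lemma rX_continuous X : continuous (rX X).
Proof. by case: hC => _ _ _ /(_ X) []. Qed.

Lemma rX_surj {X : topologicalType} y : exists x, rX X x = y.
Proof. by case: hC => _ _ _ /(_ X) [_ _]. Qed.

Lemma rX_factor {X Y : topologicalType} {f : X -> Y} : C Y -> continuous f ->
  exists g, continuous g /\ g \o rX X = f.
Proof.
case: hC => _ _ _ /(_ X) [_ _ _ univ] CY cf.
by have [g [gf _]] := univ Y CY f cf; exists g.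
Qed.

Lemma rX_injective_of_inseparable {R : topologicalType} {a b : R} : C R -> a <> b ->
  (forall U, open U -> U a <-> U b) -> forall X, injective (rX X).
Proof.
move=> CR ab ab_insep X u v ruv; apply: contrapT => uv.
pose f t := if t == u then a else b.
have f_cont : continuous f.
  apply/continuousP => U oU; have [Ua|Ua] := pselect (U a).
    suff -> : f @^-1` U = setT by exact: openT.
    apply/seteqP; split=> // t _; rewrite /f /preimage /=.
    by case: eqP => // _; apply/(ab_insep U oU).
  suff -> : f @^-1` U = set0 by exact: open0.
  apply/seteqP; split=> // t; rewrite /f /preimage /=.
  by case: eqP => // _ /(ab_insep U oU).
have [g [_ gr]] := rX_factor CR f_cont.
have fu : f u = a by rewrite /f eqxx.
have fv : f v = b by rewrite /f; case: eqP => // /esym /uv.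
by apply: ab; rewrite -fu -fv -gr /= ruv.
Qed.

Section product.
Variables (I : eqType) (X : I -> topologicalType).
Local Notation P := (prod_topology X : topologicalType).
Local Notation Q := (prod_topology (fun i => refl (X i)) : topologicalType).
Local Notation p := (prod_map (fun i => rX (X i)) : P -> Q).

Lemma rX_prod_update (z z' : P) k : (forall j, j != k -> z j = z' j) ->
  rX (X k) (z k) = rX (X k) (z' k) -> rX P z = rX P z'.
Proof.
move=> zz' rz.
have dfwith_z (w : P) : (forall j, j != k -> w j = z j) -> w = dfwith z k (w k).
  move=> wz; apply: functional_extensionality_dep => i.
  by case: dfwithP => // j kj; rewrite wz // eq_sym.
have cont : continuous (rX P \o dfwith z k).
  move=> u; apply: continuous_comp; first exact: dfwith_continuous.
  exact: rX_continuous.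
have [g [_ gr]] := rX_factor (refl_in P) cont.
rewrite (dfwith_z z) // (dfwith_z z') => [|j /zz' //].
have /(congr1 (fun h => h (z k))) := gr; have /(congr1 (fun h => h (z' k))) := gr.
by move=> /= <- <-; rewrite rz.
Qed.

Definition patch (K : seq I) (x y : P) : P := fun i => if i \in K then x i else y i.

Lemma rX_prod_patch {x y} K : p x = p y -> rX P (patch K x y) = rX P y.
Proof.
move=> pxy; elim: K => [|k K <-].
  by congr (rX P _); apply: functional_extensionality_dep.
apply: (rX_prod_update _ _ k) => [j jk|].
  by rewrite /patch in_cons (negbTE jk).
have /(congr1 (fun h => h k)) /= := pxy.
by rewrite /patch /prod_map in_cons eqxx /=; case: (k \in K).
Qed.

Lemma rX_prod_inseparable x y U : p x = p y -> open U -> U (rX P x) -> U (rX P y).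
Proof.
move=> pxy oU Ux.
have rU : open (rX P @^-1` U) by exact: (continuousP _).1 (rX_continuous P) U oU.
have [K [V [xV VU]]] := nbhs_box (open_nbhs_nbhs (conj rU Ux)).
rewrite -(rX_prod_patch K pxy); apply: VU => i iK.
by rewrite /patch iK; case: (xV i).
Qed.

Lemma rX_prod_fiber x y : p x = p y -> rX P x = rX P y.
Proof.
move=> pxy; apply: contrapT => xy.
have insep U : open U -> U (rX P x) <-> U (rX P y).
  by move=> oU; split; apply: rX_prod_inseparable.
have rX_inj := rX_injective_of_inseparable (refl_in P) xy insep.
apply: xy; congr (rX P _); apply: functional_extensionality_dep => i.
by apply: (rX_inj (X i)); have /(congr1 (fun h => h i)) := pxy.
Qed.

Lemma prod_refl_in : C Q.
Proof. by case: hC => _ prodC _ _; apply: prodC => i; exact: refl_in. Qed.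

Lemma is_mu_exists : exists mu, @is_mu refl rX I X mu.
Proof.
have p_cont : continuous p := prod_map_continuous _ (fun i => rX_continuous (X i)).
have [mu [mu_cont mur]] := rX_factor prod_refl_in p_cont.
exists mu; split=> // j; split.
  move=> a; exact: (continuous_comp (mu_cont a)
                     (@proj_continuous I (fun i => refl (X i)) j _)).
by apply: funext => x /=; have /(congr1 (fun h => h x j)) := mur.
Qed.

Lemma is_mu_factor {mu} : @is_mu refl rX I X mu -> mu \o rX P = p.
Proof.
move=> [_ mu_proj]; apply: funext => x; apply: functional_extensionality_dep => j.
by have [_ /(congr1 (fun h => h x))] := mu_proj j.
Qed.

Lemma is_mu_injective {mu} : @is_mu refl rX I X mu -> injective mu.
Proof.
move=> /is_mu_factor mur a b; have [x <-] := rX_surj a; have [y <-] := rX_surj b.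
by move=> e; apply: rX_prod_fiber; rewrite -mur /= e.
Qed.

Lemma is_mu_homeomorphism mu : (forall X, open_map (rX X)) ->
  @is_mu refl rX I X mu -> homeomorphism mu.
Proof.
move=> rX_open mu_is.
have rX_surj_i i := @rX_surj (X i).
apply: (homeomorphism_of_open_factor (rX_continuous P) _ _ mu_is.1
  (is_mu_injective mu_is) (is_mu_factor mu_is)).
- exact: (prod_map_open _ rX_surj_i (fun i => rX_open (X i))).
- exact: (prod_map_surj _ rX_surj_i).
Qed.

End product.

End epireflection.

Theorem proposition4p1
  (C : topologicalType -> Prop)
  (refl : topologicalType -> topologicalType)
  (rX : forall X : topologicalType, X -> refl X)
  (hC : @epireflective C refl rX)
  (hopen : forall X : topologicalType, open_map (rX X))
  (I : Type) (X : I -> topologicalType) :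
  (exists mu, @is_mu refl rX I X mu) /\
  (forall mu, @is_mu refl rX I X mu ->
     @homeomorphism (refl (prod_topology X : topologicalType))
                    (prod_topology (fun i => refl (X i)) : topologicalType) mu).
Proof.
split; first exact: (@is_mu_exists C refl rX hC {classic I} X).
by move=> mu; exact: (@is_mu_homeomorphism C refl rX hC {classic I} X mu hopen).
Qed.
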